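(* Let $X$ be a finite set with $|X|\ge 3$ and $(X,r)$ a Lyubashenko solution, $r(x,y)=(\lambda(y),\rho(x))$ with $\lambda,\rho\in\mathrm{Sym}(X)$ commuting. Then $(X,r)$ is simple if and only if $|X|=p$ for some prime $p$ and the group $\langle\lambda,\rho\rangle$ is cyclic of order $p$. Equivalently, the simple Lyubashenko solutions with $|X|\ge3$ are, up to isomorphism, the solutions $\mathbb{Z}_p^2\to\mathbb{Z}_p^2$, $(x,y)\mapsto(y+a,x+b)$, with $p\ge3$ prime and $a,b\in\mathbb{Z}_p$, $(a,b)\neq(0,0)$.
   Context: A set-theoretic solution $(X,r)$: $X$ non-empty, $r$ satisfies $(r\times\mathrm{id})(\mathrm{id}\times r)(r\times\mathrm{id})=(\mathrm{id}\times r)(r\times\mathrm{id})(\mathrm{id}\times r)$. For commuting permutations $\lambda,\rho$ of $X$, $r(x,y)=(\lambda(y),\rho(x))$ is a non-degenerate solution (a Lyubashenko solution). A morphism $f\colon(X,r)\to(Y,s)$ is a map with $(f\times f)r=s(f\times f)$; $(X,r)$ with $|X|>1$ is simple if every surjective morphism $(X,r)\to(Y,s)$ is bijective or has $|Y|=1$. *)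

From mathcomp Require Import all_boot all_fingroup all_solvable.
Set Implicit Arguments. Unset Strict Implicit. Unset Printing Implicit Defensive.

Definition r12 {X : Type} (r : X * X -> X * X) (t : X * X * X) : X * X * X :=
  let '(x, y, z) := t in let '(a, b) := r (x, y) in (a, b, z).
Definition r23 {X : Type} (r : X * X -> X * X) (t : X * X * X) : X * X * X :=
  let '(x, y, z) := t in let '(b, c) := r (y, z) in (x, b, c).

Definition is_solution {X : Type} (r : X * X -> X * X) : Prop :=
  forall t, r12 r (r23 r (r12 r t)) = r23 r (r12 r (r23 r t)).

Definition lyu {X : finType} (lam rho : {perm X}) (xy : X * X) : X * X :=
  (lam xy.2, rho xy.1).

Definition is_morphism {X Y : Type} (r : X * X -> X * X) (s : Y * Y -> Y * Y)
  (f : X -> Y) : Prop :=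
  forall x y, (f (r (x, y)).1, f (r (x, y)).2) = s (f x, f y).

Definition simple_solution {X : Type} (r : X * X -> X * X) : Prop :=
  (exists x y : X, x <> y) /\
  forall (Y : Type) (s : Y * Y -> Y * Y) (f : X -> Y),
    is_solution s -> is_morphism r s f -> (forall y, exists x, f x = y) ->
    bijective f \/ (forall y1 y2 : Y, y1 = y2).

From Pilot Require Import Defs.
From mathcomp Require Import all_boot all_fingroup all_solvable.
From Stdlib Require Import Classical ClassicalEpsilon.
Set Implicit Arguments. Unset Strict Implicit. Unset Printing Implicit Defensive.

(* The kernel of a morphism out of (X, r) is a partition of X whose
   blocks are permuted by lam and rho; conversely every such partition is the
   kernel of a surjective morphism onto the induced solution on the blocks. So
   (X, r) is simple iff every lam,rho-compatible partition is trivial or discrete.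
   As G = <lam, rho> is abelian, the orbits of any subgroup H of G form such a
   partition, so H is trivial or transitive; G itself cannot be trivial, since then
   every partition is compatible and |X| <= 2. Hence G is transitive and abelian,
   thus regular, and a subgroup of prime order q dividing |G| is transitive,
   giving |G| = |X| = q. Conversely, if |X| = |G| = p is prime, G is transitive,
   and a block containing a and h a with h <> 1 contains the whole <h>-orbit of a,
   which is X since h generates G. *)

Definition compatible {X T : Type} (g : X -> T) (h : X -> X) : Prop :=
  forall x y, g x = g y -> g (h x) = g (h y).

Lemma lyu_is_solution (X : finType) (lam rho : {perm X}) :
  commute lam rho -> is_solution (lyu lam rho).
Proof.
move=> lam_rho [[x y] z]; rewrite /Defs.r12 /Defs.r23 /lyu /=.
by rewrite -[rho (lam y)]permM lam_rho permM.
Qed.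

Lemma is_solution_morph_surj (X Y : Type) (r : X * X -> X * X)
    (s : Y * Y -> Y * Y) (f : X -> Y) :
  is_solution r -> is_morphism r s f -> (forall y, exists x, f x = y) ->
  is_solution s.
Proof.
move=> sol_r f_morph f_surj.
pose f3 (t : X * X * X) := let '(x, y, z) := t in (f x, f y, f z).
have f3_r12 t : Defs.r12 s (f3 t) = f3 (Defs.r12 r t).
  by case: t => [[x y] z]; rewrite /Defs.r12 /= -f_morph; case: (r (x, y)).
have f3_r23 t : Defs.r23 s (f3 t) = f3 (Defs.r23 r t).
  by case: t => [[x y] z]; rewrite /Defs.r23 /= -f_morph; case: (r (y, z)).
move=> [[a b] c].
case: (f_surj a) (f_surj b) (f_surj c) => [x <-] [y <-] [z <-].
by rewrite -[(f x, f y, f z)]/(f3 (x, y, z)) !f3_r12 !f3_r23 !f3_r12 sol_r.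
Qed.

Section LyubashenkoMorphism.
Variables (X : finType) (Y : Type) (lam rho : {perm X}).
Variables (s : Y * Y -> Y * Y) (f : X -> Y).
Hypothesis f_morph : is_morphism (lyu lam rho) s f.

Lemma lyu_morphism_compatible_lam : compatible f lam.
Proof.
move=> x y fxy; have := congr1 fst (f_morph x x); have := congr1 fst (f_morph x y).
by rewrite /= => -> ->; rewrite fxy.
Qed.

Lemma lyu_morphism_compatible_rho : compatible f rho.
Proof.
move=> x y fxy; have := congr1 snd (f_morph x x); have := congr1 snd (f_morph y x).
by rewrite /= => -> ->; rewrite fxy.
Qed.

End LyubashenkoMorphism.

Lemma compatible_gen (X : finType) (T : Type) (g : X -> T) (A : {set {perm X}}) :
  {in A, forall h : {perm X}, compatible g h} ->
  {in <<A>>%g, forall h : {perm X}, compatible g h}.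
Proof.
move=> gA h /gen_prodgP[n [c cA ->]].
apply: (big_ind (fun h : {perm X} => compatible g h)) => [x y|h1 h2 g1 g2 x y gxy|i _].
- by rewrite !perm1.
- by rewrite !permM; apply/g2/g1.
- exact: gA.
Qed.

Lemma abelian_gen_commute (gT : finGroupType) (a b : gT) :
  commute a b -> abelian <<[set a; b]>>%g.
Proof.
move=> ab; rewrite abelian_gen; apply/centsP => x /set2P[]-> y /set2P[]->;
  by [apply: commute_refl | apply: ab | apply: commute_sym].
Qed.

Lemma orbit_compatible (X : finType) (H : {group {perm X}}) (a : {perm X}) :
  a \in 'C(H)%g -> compatible (orbit 'P H) a.
Proof.
move=> aCH x y /eqP; rewrite orbit_eq_mem => /orbitP[h hH <-] /=.
apply/eqP; rewrite orbit_eq_mem; apply/orbitP; exists h => //=.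
by rewrite /aperm -!permM (centP aCH h hH).
Qed.

Lemma abelian_transitive_card (X : finType) (G : {group {perm X}}) (x : X) :
  abelian G -> orbit 'P G x = [set: X] -> #|G| = #|X|.
Proof.
move=> abG Gx; have stab1 : 'C_G[x | 'P]%g = 1%g.
  apply/trivgP/subsetP => h /setIP[hG /astab1P /= hx].
  rewrite inE; apply/eqP/permP => y.
  have /orbitP[k kG <-] : y \in orbit 'P G x by rewrite Gx inE.
  by rewrite /= perm1 /aperm -permM (centsP abG _ kG _ hG) permM (hx : h x = x).
by rewrite -(cardsT X) -Gx card_orbit stab1 indexg1.
Qed.

Lemma prime_card_transitive (X : finType) (G : {group {perm X}}) (p : nat) (x : X) :
  prime p -> #|G| = p -> #|X| = p -> orbit 'P G x = [set: X].
Proof.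
move=> p_pr Gp Xp.
have [c cG c1] : exists2 c, c \in G & c != 1%g.
  by apply/trivgPn; rewrite trivg_card1 Gp; case: p p_pr {Gp Xp} => [|[]].
have [x0 cx0] : exists x0, c x0 != x0.
  apply/existsP; apply: contraR c1 => /existsPn c_fix; apply/eqP/permP => y.
  by rewrite perm1; apply/eqP; move: (c_fix y); rewrite negbK.
have Gx0 : orbit 'P G x0 = [set: X].
  have orbit_ne1 : #|orbit 'P G x0| != 1.
    apply: contra cx0 => /eqP/card_orbit1 Gx0.
    have : c x0 \in orbit 'P G x0 by apply/orbitP; exists c.
    by rewrite Gx0 inE.
  have : #|orbit 'P G x0| %| p by rewrite -Gp dvdn_orbit.
  move/(prime_nt_dvdP p_pr orbit_ne1) => Gx0p.
  by apply/eqP; rewrite eqEcard subsetT (cardsT X) Xp Gx0p leqnn.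
by rewrite -Gx0; apply/eqP; rewrite orbit_eq_mem Gx0 inE.
Qed.

Lemma compatible_prime_transitive (X : finType) (T : Type) (G : {group {perm X}})
    (g : X -> T) :
  prime #|G| -> (forall x, orbit 'P G x = [set: X]) ->
  {in G, forall h : {perm X}, compatible g h} ->
  (forall x y, g x = g y) \/ injective g.
Proof.
move=> G_pr G_trans g_G; have [g_inj|g_ninj] := classic (injective g); [by right | left].
have [x1 [x2 [gx12 nx12]]] : exists u v, g u = g v /\ u <> v.
  apply: NNPP => no_pair; apply: g_ninj => u v guv.
  by apply: NNPP => nuv; apply: no_pair; exists u, v.
have /orbitP[h hG /= hx12] : x2 \in orbit 'P G x1 by rewrite G_trans inE.
have h_gen : G :=: <[h]>%g.
  apply: nt_gen_prime => //; rewrite !inE hG andbT.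
  by apply: contra_notN nx12 => /eqP h1; rewrite -hx12 h1 apermE perm1.
have g_hX i : g ((h ^+ i)%g x1) = g x1.
  elim: i => [|i IH]; first by rewrite expg0 perm1.
  by rewrite expgSr permM (g_G h hG _ _ IH) [h x1]hx12 gx12.
suff g_x1 x : g x = g x1 by move=> x y; rewrite !g_x1.
have /orbitP[k] : x \in orbit 'P G x1 by rewrite G_trans inE.
by rewrite h_gen => /cycleP[i ->] /= <-; apply: g_hX.
Qed.

Section SimpleLyubashenko.
Variables (X : finType) (lam rho : {perm X}).
Hypotheses (lam_rho : commute lam rho) (simple : simple_solution (lyu lam rho)).

(* The fibres of g are the kernel of the surjection onto the image of g, which
   carries the solution induced by lyu lam rho. *)
Lemma simple_lyu_compatible (T : eqType) (g : X -> T) :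
  compatible g lam -> compatible g rho -> (forall x y, g x = g y) \/ injective g.
Proof.
move=> g_lam g_rho; pose Y := {t : T | t \in codom g}.
pose q x : Y := exist _ (g x) (codom_f g x).
pose lift (t : Y) : X := iinv (valP t).
have liftK t : g (lift t) = val t by exact: f_iinv.
pose s (ab : Y * Y) := (q (lam (lift ab.2)), q (rho (lift ab.1))).
have q_morph : is_morphism (lyu lam rho) s q.
  by move=> x y; congr (_, _); apply: val_inj; [apply: g_lam | apply: g_rho];
    rewrite liftK.
have q_surj t : exists x, q x = t by exists (lift t); apply: val_inj; rewrite /= liftK.
have s_sol := is_solution_morph_surj (lyu_is_solution lam_rho) q_morph q_surj.
case: simple => _ /(_ Y s q s_sol q_morph q_surj) [q_bij|Y_triv]; [right | left].
  by move=> x y gxy; apply: (bij_inj q_bij); apply: val_inj.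
by move=> x y; rewrite -[g x]/(val (q x)) (Y_triv (q x) (q y)).
Qed.

Lemma simple_lyu_twist_card : lam = 1%g -> rho = 1%g -> #|X| <= 2.
Proof.
move=> lam1 rho1; have [x0 _ | X0] := pickP (@predT X); last by rewrite eq_card0.
have triv (h : {perm X}) : h = 1%g -> compatible (fun x => x == x0) h.
  by move=> -> x y; rewrite !perm1.
have [const|inj] := simple_lyu_compatible (triv _ lam1) (triv _ rho1).
  have all_x0 x : x = x0 by apply/eqP; rewrite (const x x0) eqxx.
  have to_unit_inj : injective (fun _ : X => tt).
    by move=> x y _; rewrite (all_x0 x) (all_x0 y).
  by have := leq_card _ to_unit_inj; rewrite card_unit => /leq_trans->.
by rewrite -card_bool; exact: leq_card _ inj.
Qed.

Local Notation G := <<[set lam; rho]>>%G.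

Lemma simple_lyu_subgroup_orbits (H : {group {perm X}}) :
  H \subset G -> H :=: 1%g \/ forall x, orbit 'P H x = [set: X].
Proof.
move=> sHG; have C_H a : a \in G -> a \in 'C(H)%g.
  by apply/subsetP/(subset_trans (abelian_gen_commute lam_rho)); rewrite centS.
have [orbit_const|orbit_inj] := simple_lyu_compatible
  (orbit_compatible (C_H _ (mem_gen (set21 lam rho))))
  (orbit_compatible (C_H _ (mem_gen (set22 lam rho)))); [right | left].
  by move=> x; apply/setP => y; rewrite inE (orbit_const x y) orbit_refl.
apply/trivgP/subsetP => h hH; rewrite inE; apply/eqP/permP => x.
by rewrite perm1; apply: orbit_inj; rewrite -[h x]/(aperm x h) orbit_act.
Qed.

Lemma simple_lyu_prime_card : 2 < #|X| -> prime #|X| /\ #|G| = #|X|.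
Proof.
move=> X_gt2; have /card_gt0P[x0 _] : 0 < #|X| by apply: leq_trans X_gt2.
have G_trans : forall x, orbit 'P G x = [set: X].
  have [G1|//] := simple_lyu_subgroup_orbits (subxx G).
  have gen1 a : a \in [set lam; rho] -> a = 1%g.
    by move=> a_gen; apply/set1gP; rewrite -G1 mem_gen.
  have := simple_lyu_twist_card (gen1 _ (set21 _ _)) (gen1 _ (set22 _ _)).
  by rewrite leqNgt X_gt2.
have GX := abelian_transitive_card (abelian_gen_commute lam_rho) (G_trans x0).
have q_pr : prime (pdiv #|G|) by rewrite pdiv_prime // GX (leq_trans _ X_gt2).
have [z zG zq] := Cauchy q_pr (pdiv_dvd #|G|).
have sZG : <[z]>%G \subset G by rewrite cycle_subG.
have [z1|z_trans] := simple_lyu_subgroup_orbits sZG.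
  by move: (prime_gt1 q_pr); rewrite -zq /order z1 cards1.
have : #|X| %| pdiv #|G| by rewrite -zq -cardsT -(z_trans x0) dvdn_orbit.
have X_ne1 : #|X| != 1 by apply: contraTneq X_gt2 => ->.
by move/(prime_nt_dvdP q_pr X_ne1) => Xq; split; rewrite // Xq.
Qed.
End SimpleLyubashenko.

Lemma prime_card_lyu_simple (X : finType) (lam rho : {perm X}) (p : nat) :
  commute lam rho -> prime p -> #|X| = p -> #|<<[set lam; rho]>>%G| = p ->
  simple_solution (lyu lam rho).
Proof.
move=> lam_rho p_pr Xp Gp; split.
  have /card_gt1P[x [y [_ _ /eqP nxy]]] : 1 < #|X| by rewrite Xp prime_gt1.
  by exists x, y.
move=> Y s f _ f_morph f_surj.
have f_G : {in <<[set lam; rho]>>%G, forall h : {perm X}, compatible f h}.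
  apply: compatible_gen => h /set2P[]->.
    exact: lyu_morphism_compatible_lam f_morph.
  exact: lyu_morphism_compatible_rho f_morph.
have G_pr : prime #|<<[set lam; rho]>>%G| by rewrite Gp.
have G_trans x := prime_card_transitive x p_pr Gp Xp.
have [f_const|f_inj] := compatible_prime_transitive G_pr G_trans f_G; [right | left].
  by move=> y1 y2; case: (f_surj y1) (f_surj y2) => [x1 <-] [x2 <-]; apply: f_const.
pose f_inv y := proj1_sig (constructive_indefinite_description _ (f_surj y)).
have f_invK : cancel f_inv f.
  by move=> y; rewrite /f_inv; case: constructive_indefinite_description.
by exists f_inv => // x; apply: f_inj; rewrite f_invK.
Qed.

Theorem corollary4p2 (X : finType) (lam rho : {perm X})
  (hX : 2 < #|X|) (hcomm : commute lam rho) :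
  simple_solution (lyu lam rho) <->
  exists p : nat, [/\ prime p, #|X| = p,
    cyclic <<[set lam; rho]>>%g & #|<<[set lam; rho]>>%g| = p].
Proof.
split=> [simple | [p [p_pr Xp _ Gp]]].
  have [X_pr GX] := simple_lyu_prime_card hcomm simple hX.
  by exists #|X|; split; rewrite // prime_cyclic // GX.
exact: prime_card_lyu_simple hcomm p_pr Xp Gp.
Qed.
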